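(* Let $U\subseteq L_{\mathrm{up}}$ be a set of up-links such that the sets $P_u$, $u\in U$, are pairwise disjoint, and let $(C,A)$ be a (weakly) connected component of the dependency graph of $U$ (which is an arborescence). Let $\ell\in C$ and let $H_\ell$ be the arc set of the directed path in $(C,A)$ from the root of $(C,A)$ to $\ell$. Then $$\bigl|\{\bar\ell\in C\setminus\{\ell\}\colon \mathrm{apex}(\ell)\in V_{\bar\ell}\}\bigr|\ \le\ \bigl|\{u\in U\colon H_\ell\cap A_u\neq\emptyset\}\bigr|.$$
   Context: Let $(G=(V,E),L,w)$ be a WTAP instance (spanning tree $G$, links $L\subseteq\binom V2$, weights $w>0$) with a fixed root $r\in V$, and let $F\subseteq L$ be a WTAP solution, i.e. $\bigcup_{\ell\in F}P_\ell=E$, where $P_\ell$ is the edge set of the tree path between the endpoints of $\ell$ and $V_\ell$ its vertex set. Ancestors of $v$ are the vertices on the $r$-$v$ path in $G$ (including $r$ and $v$); descendants are defined reciprocally. $\mathrm{apex}(\ell)$ is the vertex of $V_\ell$ closest to $r$. An up-link is a link $\{t,b\}$ with $t$ an ancestor of $b$; $L_{\mathrm{up}}$ is the set of up-links. For $v\in V$ let $B_v=\{\ell\in F\colon\mathrm{apex}(\ell)\text{ is a descendant of }v\}$. For an up-link $u=\{t,b\}$ with $t$ an ancestor of $b$, let $v_u$ be the ancestor of $t$ farthest from $r$ such that $P_u\subseteq\bigcup_{\ell\in B_{v_u}}P_\ell$, and fix $F_u\subseteq B_{v_u}$ inclusion-wise minimal with $P_u\subseteq\bigcup_{\ell\in F_u}P_\ell$.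 For $\ell\in F_u$ let $P_{u,\ell}=P_u\setminus\bigcup_{\bar\ell\in F_u\setminus\{\ell\}}P_{\bar\ell}$; these sets are nonempty, pairwise disjoint, and each is the edge set of a path. Define $\ell_1\prec_u\ell_2$ iff the edges of $P_{u,\ell_1}$ appear before those of $P_{u,\ell_2}$ on the $t$-$b$ path in $G$. If $\ell_1\prec_u\cdots\prec_u\ell_q$ are the links of $F_u$, let $A_u=\{(\ell_i,\ell_{i+1})\colon i=1,\dots,q-1\}$. The dependency graph of $U\subseteq L_{\mathrm{up}}$ is the directed graph with vertex set $F$ whose arc set is the disjoint union of the $A_u$, $u\in U$. When the $P_u$, $u\in U$, are pairwise disjoint, this graph is a branching (no directed cycles, in-degrees at most one), so each weakly connected component is an arborescence. *)

From mathcomp Require Import all_boot all_order all_algebra.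
Set Implicit Arguments. Unset Strict Implicit. Unset Printing Implicit Defensive.

(* The tree edge {c, par c} (c <> r) is identified with
   its child endpoint c, so the edge set E is [set c | c != r].  Links are
   2-element vertex sets. *)

Definition is_rooted_tree (V : finType) (r : V) (par : V -> V) : Prop :=
  par r = r /\ forall v, exists k, iter k par v = r.

Definition anc (V : finType) (par : V -> V) (x v : V) : bool :=
  [exists k : 'I_#|V|.+1, iter k par v == x].

(* number of ancestors = distance to r plus one *)
Definition depth (V : finType) (par : V -> V) (v : V) : nat :=
  #|[set y | anc par y v]|.

Definition tree_edges (V : finType) (r : V) : {set V} := [set c | c != r].

(* P_l : edges of the tree path between the endpoints of l : tree edge c lies on
   it iff exactly one endpoint of l lies in the subtree of c *)
Definition lpath (V : finType) (r : V) (par : V -> V) (l : {set V}) : {set V} :=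
  [set c | (c != r) && odd #|[set x in l | anc par c x]|].

Definition lverts (V : finType) (r : V) (par : V -> V) (l : {set V}) : {set V} :=
  l :|: [set x | [exists c in lpath r par l, (x == c) || (x == par c)]].

Definition apex (V : finType) (r : V) (par : V -> V) (l : {set V}) : V :=
  odflt r [pick x in lverts r par l |
             [forall y in lverts r par l, depth par x <= depth par y]].

Definition is_uplink (V : finType) (par : V -> V) (u : {set V}) : bool :=
  (#|u| == 2) && [exists t in u, [forall x in u, anc par t x]].

Definition utop (V : finType) (r : V) (par : V -> V) (u : {set V}) : V :=
  odflt r [pick t in u | [forall x in u, anc par t x]].

Definition Bv (V : finType) (r : V) (par : V -> V) (F : {set {set V}}) (v : V)
  : {set {set V}} := [set l in F | anc par v (apex r par l)].

Definition covered_by (V : finType) (r : V) (par : V -> V)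
  (S : {set {set V}}) (X : {set V}) : bool :=
  X \subset \bigcup_(l in S) lpath r par l.

Definition vu (V : finType) (r : V) (par : V -> V) (F : {set {set V}})
  (u : {set V}) : V :=
  odflt r [pick x | [&& anc par x (utop r par u),
                        covered_by r par (Bv r par F x) (lpath r par u) &
                        [forall y, (anc par y (utop r par u) &&
                                    covered_by r par (Bv r par F y) (lpath r par u))
                                   ==> (depth par y <= depth par x)]]].

(* S is an admissible choice of F_u: inclusion-wise minimal subset of B_{v_u}
   covering P_u *)
Definition minimal_cover (V : finType) (r : V) (par : V -> V)
  (F : {set {set V}}) (u : {set V}) (S : {set {set V}}) : Prop :=
  [/\ S \subset Bv r par F (vu r par F u),
      covered_by r par S (lpath r par u) &
      forall S' : {set {set V}}, S' \proper S -> ~~ covered_by r par S' (lpath r par u)].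

Definition Pul (V : finType) (r : V) (par : V -> V)
  (Fu : {set V} -> {set {set V}}) (u l : {set V}) : {set V} :=
  lpath r par u :\: \bigcup_(l' in Fu u :\ l) lpath r par l'.

Definition precu (V : finType) (r : V) (par : V -> V)
  (Fu : {set V} -> {set {set V}}) (u l1 l2 : {set V}) : bool :=
  [forall c1 in Pul r par Fu u l1, forall c2 in Pul r par Fu u l2,
     (c1 != c2) && anc par c1 c2].

Definition Au (V : finType) (r : V) (par : V -> V)
  (Fu : {set V} -> {set {set V}}) (u : {set V}) : {set {set V} * {set V}} :=
  [set a | [&& a.1 \in Fu u, a.2 \in Fu u, precu r par Fu u a.1 a.2 &
              [forall l in Fu u, ~~ (precu r par Fu u a.1 l && precu r par Fu u l a.2)]]].

Definition darcs (V : finType) (r : V) (par : V -> V)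
  (Fu : {set V} -> {set {set V}}) (U : {set {set V}}) : {set {set V} * {set V}} :=
  [set a | [exists u in U, a \in Au r par Fu u]].

Definition wrel (V : finType) (r : V) (par : V -> V)
  (Fu : {set V} -> {set {set V}}) (U : {set {set V}}) : rel {set V} :=
  fun x y => ((x, y) \in darcs r par Fu U) || ((y, x) \in darcs r par Fu U).

(* weakly connected component of x (x should be a vertex, i.e. x \in F) *)
Definition wcomp (V : finType) (r : V) (par : V -> V)
  (Fu : {set V} -> {set {set V}}) (U : {set {set V}}) (x : {set V}) : {set {set V}} :=
  [set y | connect (wrel r par Fu U) x y].

From mathcomp Require Import all_boot all_order all_algebra.
From mathcomp Require Import zify.
Set Implicit Arguments. Unset Strict Implicit. Unset Printing Implicit Defensive.

(* An arc (x, y) of A_u moves the apex strictly down, and apex y lies both on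
   P_x and on P_u.  So apexes decrease along directed paths, and in-degrees are
   at most one because the P_u are disjoint.  Suppose apex l lies in V_lb for some
   lb of the component.  Then lb is on the root-to-l path: otherwise lb hangs off
   that path at some x, in a branch y' sibling to the path successor y.  Sibling
   branches never reach below each other's apex: if the branch of y reaches a link
   z with apex y' in P_z, then either apex z is above the top of u', so that
   B_(apex y) covers P_u' and the maximality of v_u' puts apex y above apex x, or
   apex z lies on P_u', so that z is in F_u' strictly between x and y' for <_u'.
   Finally, charging lb to the up-link of its out-arc on the path is injective:
   if x1 <_u x2 <_u y2, then apex y2 is above no vertex of V_x1, whereas a path
   link y2 has apex y2 above apex l. *)

(** * Walks, weak connectivity and counting *)

Section Walks.
Variable T : eqType.
Implicit Types (x y z a b : T) (p : seq T).

Lemma zip_walk_mem x p a b :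
  (a, b) \in zip (x :: p) p -> a \in x :: p /\ b \in p.
Proof.
elim: p x => [|y p IH] x //=.
rewrite in_cons => /orP [/eqP [-> ->]|/IH [ap bp]]; first by rewrite !inE !eqxx.
by split; apply/orP; right.
Qed.

Lemma path_zip (e : rel T) x p a b :
  path e x p -> (a, b) \in zip (x :: p) p -> e a b.
Proof.
elim: p x => [|y p IH] x //= /andP [exy pp].
by rewrite in_cons => /orP [/eqP [-> ->] //|/(IH _ pp)].
Qed.

Lemma walk_succ x p z :
  z \in x :: p -> z != last x p -> exists y, (z, y) \in zip (x :: p) p.
Proof.
elim: p x => [|y p IH] x /=; first by rewrite inE => /eqP ->; rewrite eqxx.
rewrite in_cons => /orP [/eqP ->|zp zl]; first by exists y; rewrite mem_head.
by have [w zw] := IH y zp zl; exists w; rewrite in_cons zw orbT.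
Qed.

Lemma walk_pred x p z : z \in p -> exists w, (w, z) \in zip (x :: p) p.
Proof.
elim: p x => [|y p IH] x //=.
rewrite in_cons => /orP [/eqP ->|zp]; first by exists x; rewrite mem_head.
by have [w wz] := IH y zp; exists w; rewrite in_cons wz orbT.
Qed.

End Walks.

Section Connect.
Variable T : finType.
Implicit Types (e : rel T) (x y z : T).

Lemma connect_last_step e x z :
  connect e x z -> z != x -> exists2 y, connect e x y & e y z.
Proof.
case/connectP => p; case/lastP: p => [|p y] /=; first by move=> _ ->; rewrite eqxx.
rewrite rcons_path last_rcons => /andP [xp ey] -> _.
by exists (last x p) => //; apply/connectP; exists p.
Qed.

Lemma path_connect_last e x p z :
  path e x p -> z \in x :: p -> connect e z (last x p).
Proof.
elim: p x z => [|y p IH] x z /=; first by move=> _; rewrite inE => /eqP ->.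
move=> /andP [exy py]; rewrite in_cons => /orP [/eqP ->|/(IH _ _ py) //].
exact: connect_trans (connect1 exy) (IH y y py (mem_head y p)).
Qed.

Lemma connect_path_ind e (I : T -> Prop) x :
  I x -> (forall y y', I y -> e y y' -> I y') -> forall z, connect e x z -> I z.
Proof.
move=> Ix Istep z /connectP [p]; elim: p x Ix => [|y p IH] x Ix /=; first by move=> _ ->.
by case/andP => exy py; apply: IH py; apply: Istep exy.
Qed.

Variable e : rel T.
Hypothesis e_pred_uniq : forall x x' y, e x y -> e x' y -> x = x'.

(* As in-degrees are at most one and [rho] has none, a backward arc out of a
   vertex of the walk is an arc of the walk. *)
Lemma weak_connect_walk rho s z :
  (forall y, ~~ e y rho) -> path e rho s ->
  connect (fun a b => e a b || e b a) (last rho s) z ->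
  z \in rho :: s \/ exists x c, [/\ x \in rho :: s, e x c,
    (x, c) \notin zip (rho :: s) s & connect e c z].
Proof.
move=> rho_src es; move: z; apply: connect_path_ind; first by left; apply: mem_last.
move=> y y' Iy /orP [eyy'|ey'y].
  case: Iy => [yW|[x [c [xW exc xcW cy]]]]; last first.
    by right; exists x, c; split => //; apply: connect_trans cy (connect1 eyy').
  case yy'W: ((y, y') \in zip (rho :: s) s).
    by left; have [_ y's] := zip_walk_mem yy'W; rewrite in_cons y's orbT.
  by right; exists y, y'; rewrite yy'W; split.
case: Iy => [yW|[x [c [xW exc xcW cy]]]].
  have [yrho|yrho] := eqVneq y rho; first by move: (rho_src y'); rewrite -yrho ey'y.
  have ys : y \in s by move: yW; rewrite in_cons (negbTE yrho).
  have [w wy] := walk_pred rho ys.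
  rewrite (e_pred_uniq ey'y (path_zip es wy)); left.
  by have [] := zip_walk_mem wy.
have [cy_eq|cy_ne] := eqVneq y c.
  by rewrite -cy_eq in exc; rewrite (e_pred_uniq ey'y exc); left.
have [p cp epy] := connect_last_step cy cy_ne.
rewrite (e_pred_uniq ey'y epy); right; exists x, c; split => //.
Qed.

End Connect.

Lemma leq_card_rel (T T' : finType) (A : {set T}) (B : {set T'}) (R : T -> T' -> bool) :
  (forall x, x \in A -> exists2 y, y \in B & R x y) ->
  (forall x1 x2 y, x1 \in A -> x2 \in A -> y \in B -> R x1 y -> R x2 y -> x1 = x2) ->
  #|A| <= #|B|.
Proof.
move=> RAB Rinj; have [->|[x0 x0A]] := set_0Vmem A; first by rewrite cards0.
have [y0 _ _] := RAB x0 x0A.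
pose g x := odflt y0 [pick y in B | R x y].
have gP x : x \in A -> g x \in B /\ R x (g x).
  move=> xA; rewrite /g; case: pickP => [y /andP [] //|noy] /=.
  by have [y yB Rxy] := RAB x xA; move: (noy y); rewrite yB Rxy.
have g_inj : {in A &, injective g}.
  move=> x1 x2 x1A x2A gx12; have [gx1B R1] := gP _ x1A; have [_ R2] := gP _ x2A.
  by apply: (Rinj x1 x2 (g x1)) => //; rewrite gx12.
rewrite -(card_in_imset g_inj); apply: subset_leq_card.
by apply/subsetP => _ /imsetP [x xA ->]; have [] := gP x xA.
Qed.

Lemma card_set2_pred (T : finType) (P : pred T) (x y : T) : x != y ->
  #|[set z in [set x; y] | P z]| = P x + P y.
Proof. by move=> xy; rewrite -sum1dep_card big_mkcondr big_setU1 ?big_set1 ?inE. Qed.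

Lemma iter_small_index (T : finType) (f : T -> T) x k :
  exists2 k', k' <= #|T| & iter k' f x = iter k f x.
Proof.
have [i [j ij fij]] : exists i, exists2 j : 'I_#|T|.+1, i != j & iter i f x = iter j f x.
  apply/injectivePn; apply/negP => /injectiveP inj.
  by have := leq_card _ inj; rewrite card_ord ltnn.
wlog lt_ij : i j ij fij / i < j.
  move=> sym; case: (ltngtP i j) => [|lt_ji|eq_ij]; first exact: sym.
    by apply: (sym j i); rewrite // eq_sym.
  by move: ij; rewrite -(inj_eq val_inj) /= eq_ij eqxx.
have jT : j <= #|T| by rewrite -ltnS.
elim: k {-2}k (leqnn k) => [|n IH] k kn; first by exists 0; case: k kn.
have [kT|Tk] := leqP k #|T|; first by exists k.
have -> : iter k f x = iter (k - (j - i)) f x.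
  have -> : k - (j - i) = (k - j) + i by lia.
  by rewrite -{1}(subnK (leq_trans jT (ltnW Tk))) !iterD fij.
apply: IH; lia.
Qed.

(** * Ancestors in a rooted tree *)

Section Ancestors.
Variables (V : finType) (par : V -> V).
Implicit Types x y z v : V.
Local Notation anc := (anc par).

Lemma ancP x v : reflect (exists k, iter k par v = x) (anc x v).
Proof.
apply: (iffP existsP) => [[k /eqP <-]|[k <-]]; first by exists k.
have [k' kV <-] := iter_small_index par v k.
by exists (Ordinal (kV : k' < #|V|.+1)).
Qed.

Lemma anc_refl x : anc x x.
Proof. by apply/ancP; exists 0. Qed.

Lemma anc_trans x y z : anc x y -> anc y z -> anc x z.
Proof. by move=> /ancP [a <-] /ancP [b <-]; apply/ancP; exists (a + b); rewrite iterD. Qed.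

Lemma anc_par x v : anc x (par v) -> anc x v.
Proof. by move=> /ancP [k <-]; apply/ancP; exists k.+1; rewrite iterSr. Qed.

Lemma anc_par_neq x v : anc x v -> x != v -> anc x (par v).
Proof.
by move=> /ancP [[|k] <-]; rewrite ?eqxx // => _; apply/ancP; exists k; rewrite iterSr.
Qed.

Lemma anc_total x y v : anc x v -> anc y v -> anc x y || anc y x.
Proof.
move=> /ancP [a <-] /ancP [b <-]; have [ab|ba] := leqP a b.
  by apply/orP; right; apply/ancP; exists (b - a); rewrite -iterD subnK.
by apply/orP; left; apply/ancP; exists (a - b); rewrite -iterD subnK // ltnW.
Qed.

Lemma depth_anc x y : anc x y -> depth par x <= depth par y.
Proof.
move=> xy; apply: subset_leq_card; apply/subsetP => z; rewrite !inE => zx.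
exact: anc_trans zx xy.
Qed.

End Ancestors.

Section RootedTree.
Variables (V : finType) (r : V) (par : V -> V).
Hypothesis par_tree : is_rooted_tree r par.
Local Notation anc := (anc par).

Lemma iter_par_root k : iter k par r = r.
Proof. by elim: k => //= k ->; case: par_tree. Qed.

Lemma anc_root v : anc r v.
Proof. by case: par_tree => _ /(_ v) [k rk]; apply/ancP; exists k. Qed.

Lemma anc_rootE x : anc x r -> x = r.
Proof. by move=> /ancP [k <-]; rewrite iter_par_root. Qed.

Lemma iter_par_cycle v n : 0 < n -> iter n par v = v -> v = r.
Proof.
move=> n_gt0 vn; case: par_tree => _ /(_ v) [m vm].
have iter_mul k : iter (k * n) par v = v by elim: k => //= k IH; rewrite mulSn iterD IH vn.
by rewrite -(iter_mul m) -(subnK (leq_pmulr m n_gt0)) iterD vm iter_par_root.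
Qed.

Lemma anc_antisym x y : anc x y -> anc y x -> x = y.
Proof.
move=> /ancP [[|a] ya] /ancP [b xb]; first by rewrite -ya.
have yr : y = r.
  by apply: (@iter_par_cycle y (b + a.+1)); [rewrite addnS | rewrite iterD ya xb].
by rewrite -ya yr iter_par_root.
Qed.

Lemma anc_par_self v : anc v (par v) -> v = r.
Proof.
move=> v_pv; apply: (@iter_par_cycle v 1) => //=.
exact: anc_antisym (anc_par (anc_refl _ _)) v_pv.
Qed.

Lemma child_on_path w x : anc w x -> w != x ->
  exists c, [/\ par c = w, anc c x & c != r].
Proof.
move=> /ancP wx w_ne_x; have wx' : exists k, iter k par x == w by case: wx => k <-; exists k.
case: (ex_minnP wx') => [[|m] /eqP xm m_min]; first by move: w_ne_x; rewrite -xm eqxx.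
exists (iter m par x); split; [by rewrite -iterS | by apply/ancP; exists m |].
apply/eqP => mr; suff: iter m par x == w by move/m_min; rewrite ltnn.
by rewrite -xm iterS mr; case: par_tree => ->.
Qed.

Definition sanc x y := (x != y) && anc x y.

Lemma sancW x y : sanc x y -> anc x y. Proof. by case/andP. Qed.

Lemma sanc_neq x y : sanc x y -> x != y. Proof. by case/andP. Qed.

Lemma sanc_nanc x y : sanc x y -> ~~ anc y x.
Proof. by case/andP => xy yx; apply: contra xy => /(anc_antisym yx) ->. Qed.

Lemma sanc_par x v : v != r -> anc x (par v) -> sanc x v.
Proof.
move=> vr x_pv; rewrite /sanc anc_par // andbT.
by apply: contra vr => /eqP xv; subst v; rewrite (anc_par_self x_pv).
Qed.

Lemma sanc_anc_trans x y z : sanc x y -> anc y z -> sanc x z.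
Proof.
case/andP => xy x_y y_z; rewrite /sanc (anc_trans x_y y_z) andbT.
by apply: contra xy => /eqP xz; subst z; rewrite (anc_antisym x_y y_z).
Qed.

Lemma anc_sanc_trans x y z : anc x y -> sanc y z -> sanc x z.
Proof.
move=> x_y /andP [yz y_z]; rewrite /sanc (anc_trans x_y y_z) andbT.
by apply: contra yz => /eqP xz; subst z; rewrite (anc_antisym y_z x_y).
Qed.

Lemma anc_cases x y v : anc x v -> anc y v -> [\/ x = y, sanc x y | sanc y x].
Proof.
move=> xv yv; have [->|xy] := eqVneq x y; first by constructor 1.
case/orP: (anc_total xv yv) => xy'; [constructor 2 | constructor 3];
  by rewrite /sanc ?xy // eq_sym xy.
Qed.

Lemma anc_sanc_total x y v : anc x v -> anc y v -> ~~ anc x y -> sanc y x.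
Proof. by move=> xv yv; case: (anc_cases xv yv) => [->|/sancW ->|] //; rewrite anc_refl. Qed.

Lemma sanc_neq_root x y : sanc x y -> y != r.
Proof.
by move=> xy; apply: contra (sanc_neq xy) => /eqP yr; subst y; rewrite (anc_rootE (sancW xy)).
Qed.

Lemma depth_sanc x y : sanc x y -> depth par x < depth par y.
Proof.
move=> xy; apply: proper_card; apply/properP; split.
  by apply/subsetP => z; rewrite !inE => zx; apply: anc_trans zx (sancW xy).
by exists y; rewrite !inE ?anc_refl // sanc_nanc.
Qed.

(** * Tree paths of links and up-links *)

Lemma mem_lpath2 x y c : x != y ->
  (c \in lpath r par [set x; y]) = (c != r) && (anc c x (+) anc c y).
Proof.
move=> xy; rewrite /lpath inE; congr (_ && _).
by rewrite (card_set2_pred (anc c)) // oddD !oddb.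
Qed.

Lemma mem_lverts l z : (z \in lverts r par l) =
  (z \in l) || [exists c in lpath r par l, (z == c) || (z == par c)].
Proof. by rewrite /lverts !inE. Qed.

Lemma lpath_lverts l c : c \in lpath r par l ->
  c \in lverts r par l /\ par c \in lverts r par l.
Proof.
move=> cP; rewrite !mem_lverts; split; apply/orP; right; apply/existsP; exists c;
  by rewrite cP eqxx ?orbT.
Qed.

Lemma lpath_neq_root l c : c \in lpath r par l -> c != r.
Proof. by rewrite /lpath inE => /andP []. Qed.

Definition lca x y := [arg max_(w > r | anc w x && anc w y) depth par w].

Lemma lcaP x y : [/\ anc (lca x y) x, anc (lca x y) y &
  forall z, anc z x -> anc z y -> anc z (lca x y)].
Proof.
rewrite /lca; case: arg_maxnP; first by rewrite !anc_root.
move=> w /andP [wx wy] w_max; split => // z zx zy.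
case: (anc_cases zx wx) => [->|/sancW //|wz]; first exact: anc_refl.
by have := w_max z; rewrite zx zy => /(_ isT) /=; rewrite leqNgt depth_sanc.
Qed.

Lemma lverts2_between x y w z : x != y -> anc w x -> anc w y ->
  z \in lverts r par [set x; y] -> anc w z /\ (anc z x || anc z y).
Proof.
move=> xy wx wy; rewrite mem_lverts !inE.
case/orP => [/orP [] /eqP -> | /existsP [c /andP [cP zc]]]; rewrite ?anc_refl ?orbT //.
move: cP; rewrite mem_lpath2 // => /andP [cr cxy].
wlog cx : x y xy wx wy cxy / anc c x.
  move=> sym; case cx: (anc c x); first exact: sym.
  have cy : anc c y by rewrite cx in cxy.
  by rewrite orbC; apply: (sym y x); rewrite // 1?eq_sym 1?addbC.
have cy : ~~ anc c y by rewrite cx in cxy.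
have wc : anc w c by apply: sancW (anc_sanc_total cx wx _); apply: contra cy => /anc_trans; apply.
have w_pc : anc w (par c).
  by apply: (anc_par_neq wc); apply/eqP => wc_eq; rewrite -wc_eq wy in cy.
by case/orP: zc => /eqP ->; rewrite ?wc ?cx ?w_pc ?(anc_trans (anc_par (anc_refl _ _)) cx).
Qed.

Lemma lca_lverts2 x y : x != y -> lca x y \in lverts r par [set x; y].
Proof.
move=> xy; have [wx wy w_max] := lcaP x y; rewrite mem_lverts !inE.
have [-> | wnx] := eqVneq (lca x y) x; first by [].
have [-> | wny] := eqVneq (lca x y) y; first by rewrite orbT.
have [c [pc cx cr]] := child_on_path wx wnx.
apply/orP; right; apply/existsP; exists c; rewrite pc eqxx orbT andbT mem_lpath2 // cr cx /=.
apply: contra cr => cy; have := w_max c cx cy; rewrite -pc => /anc_par_self ->.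
by rewrite eqxx.
Qed.

Lemma apex2 x y : x != y -> apex r par [set x; y] = lca x y.
Proof.
move=> xy; have [wx wy _] := lcaP x y.
have w_low z : z \in lverts r par [set x; y] -> anc (lca x y) z.
  by move=> /(lverts2_between xy wx wy) [].
rewrite /apex; case: pickP => [z /andP [zV /forallP z_min] | no_min] /=; last first.
  move: (no_min (lca x y)); rewrite lca_lverts2 //=; move/negP; case.
  by apply/forallP => z; apply/implyP => /w_low /depth_anc.
have := z_min (lca x y); rewrite lca_lverts2 //= => dz.
case: (anc_cases (w_low z zV) (anc_refl par z)) => [// | wz | zw].
  by move: dz; rewrite leqNgt depth_sanc.
by move: (w_low z zV); rewrite (negbTE (sanc_nanc zw)).
Qed.

Section Link.
Variable l : {set V}.
Hypothesis card_l : #|l| = 2.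
Local Notation P := (lpath r par l).
Local Notation Vl := (lverts r par l).

Lemma apex_lverts : apex r par l \in Vl.
Proof.
have /cards2P [x [y [xy ->]]] : #|l| == 2 by rewrite card_l.
by rewrite apex2 // lca_lverts2.
Qed.

Lemma apex_anc z : z \in Vl -> anc (apex r par l) z.
Proof.
have /cards2P [x [y [xy ->]]] : #|l| == 2 by rewrite card_l.
by rewrite apex2 //; have [wx wy _] := lcaP x y; case/(lverts2_between xy wx wy).
Qed.

Lemma apex_sanc c : c \in P -> sanc (apex r par l) c.
Proof.
move=> cP; apply: sanc_par; first exact: lpath_neq_root cP.
exact: apex_anc (lpath_lverts cP).2.
Qed.

Lemma apex_notin_lpath : apex r par l \notin P.
Proof. by apply/negP => /apex_sanc /sanc_neq; rewrite eqxx. Qed.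

Lemma lpath_separating q z z' :
  z \in Vl -> z' \in Vl -> anc q z -> ~~ anc q z' -> q \in P.
Proof.
have /cards2P [x [y [xy ->]]] : #|l| == 2 by rewrite card_l.
have [wx wy w_max] := lcaP x y.
move=> /(lverts2_between xy wx wy) [_ zxy] /(lverts2_between xy wx wy) [wz' _] qz qz'.
have qw : ~~ anc q (lca x y) by apply: contra qz' => /anc_trans; apply.
rewrite mem_lpath2 //; apply/andP; split; first by apply: contra qz' => /eqP ->; apply: anc_root.
case/orP: zxy => [zx | zy].
  by have qx := anc_trans qz zx; rewrite qx; apply: contra qw; apply: w_max.
have qy := anc_trans qz zy; rewrite qy addbT; apply: contra qw => qx.
exact: w_max.
Qed.

Lemma lpath_below p g f : p \in Vl -> sanc p g -> anc g f -> f \in P -> g \in P.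
Proof.
move=> pV pg gf fP.
exact: lpath_separating (lpath_lverts fP).1 pV gf (sanc_nanc pg).
Qed.

Lemma lpath_convex g1 g2 g3 : g1 \in P -> g3 \in P -> anc g1 g2 -> anc g2 g3 -> g2 \in P.
Proof.
move=> g1P g3P g12 g23.
apply: lpath_separating (lpath_lverts g3P).1 (lpath_lverts g1P).2 g23 _.
apply/negP => g2_pg1; have g12_eq := anc_antisym g12 (anc_par g2_pg1); subst g2.
by move: (lpath_neq_root g1P); rewrite (anc_par_self g2_pg1) eqxx.
Qed.

End Link.

Lemma uplinkP u : is_uplink par u -> exists b,
  [/\ anc (utop r par u) b, utop r par u != b & u = [set utop r par u; b]].
Proof.
case/andP => /cards2P [x [y [xy ->]]] /existsP [t0 /andP [t0u /forallP t0_top]].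
rewrite /utop; case: pickP => [t /andP [tu /forallP t_top] | no_top] /=; last first.
  by move: (no_top t0); rewrite t0u /= => /negP; case; apply/forallP.
move: tu; rewrite !inE => /orP [] /eqP tE; subst t.
  by exists y; split => //; move: (t_top y); rewrite !inE eqxx orbT.
exists x; split; rewrite 1?eq_sym 1?setUC //.
by move: (t_top x); rewrite !inE eqxx.
Qed.

Lemma lpath_uplink u : is_uplink par u -> exists b, forall c,
  (c \in lpath r par u) = sanc (utop r par u) c && anc c b.
Proof.
move=> /uplinkP [b [tb tnb {1}->]]; exists b => c; set t := utop r par u in tb tnb *.
rewrite mem_lpath2 //; case ct: (anc c t); case cb: (anc c b) => //=.
- by rewrite andbF andbT; apply/esym/negP => /sanc_nanc; rewrite ct.
- by rewrite (anc_trans ct tb) in cb.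
- have tc : anc t c by move: (anc_total cb tb); rewrite ct.
  have cr : c != r by apply: contraFneq ct => ->; apply: anc_root.
  have tnc : t != c by apply: contraFneq ct => <-; apply: anc_refl.
  by rewrite /sanc tc cr tnc.
- by rewrite !andbF.
Qed.

(** * Minimal covers of up-links and the dependency graph *)

Section Covers.
Variables (F : {set {set V}}) (Fu : {set V} -> {set {set V}}) (U : {set {set V}}).
Hypothesis card_F : forall e, e \in F -> #|e| = 2.
Hypothesis F_covers : \bigcup_(e in F) lpath r par e = tree_edges r.
Hypothesis U_uplink : forall u, u \in U -> is_uplink par u.
Hypothesis Fu_min : forall u, u \in U -> minimal_cover r par F u (Fu u).
Hypothesis U_disjoint : forall u1 u2, u1 \in U -> u2 \in U -> u1 != u2 ->
  [disjoint lpath r par u1 & lpath r par u2].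
Implicit Types u w x y z : {set V}.

Local Notation LP := (lpath r par).
Local Notation LV := (lverts r par).
Local Notation apx := (apex r par).
Local Notation PU := (Pul r par Fu).
Local Notation prec := (precu r par Fu).
Local Notation AU := (Au r par Fu).

Lemma card_uplink u : u \in U -> #|u| = 2.
Proof. by move=> /U_uplink /andP [/eqP]. Qed.

Lemma uplink_eq_of_lpath u1 u2 c : u1 \in U -> u2 \in U ->
  c \in LP u1 -> c \in LP u2 -> u1 = u2.
Proof.
move=> u1U u2U c1 c2; apply/eqP; apply: contraTT c2 => u12.
by rewrite (disjointFr (U_disjoint u1U u2U u12) c1).
Qed.

Lemma Fu_subF u : u \in U -> Fu u \subset F.
Proof.
move=> /Fu_min [FuB _ _]; apply: subset_trans FuB _.
by apply/subsetP => x; rewrite inE => /andP [].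
Qed.

Lemma card_Fu u x : u \in U -> x \in Fu u -> #|x| = 2.
Proof. by move=> uU xF; apply: card_F; apply: (subsetP (Fu_subF uU)). Qed.

Lemma Fu_cover u e : u \in U -> e \in LP u -> exists2 w, w \in Fu u & e \in LP w.
Proof. by move=> /Fu_min [_ cov _] /(subsetP cov) /bigcupP [w]; exists w. Qed.

Lemma Pul_nonempty u x : u \in U -> x \in Fu u -> exists e, e \in PU u x.
Proof.
move=> uU xF; have [_ _ min] := Fu_min uU.
have /min /subsetPn [e eu enot] : Fu u :\ x \proper Fu u.
  by apply/properP; split; [apply: subsetDl | exists x; rewrite ?inE ?eqxx].
by exists e; rewrite /Pul inE eu enot.
Qed.

Lemma Pul_uniq u x w e : e \in PU u x -> w \in Fu u -> e \in LP w -> w = x.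
Proof.
rewrite /Pul inE => /andP [enot _] wF ew; apply/eqP; apply: contraNT enot => wx.
by apply/bigcupP; exists w; rewrite // !inE wx.
Qed.

Lemma Pul_lpath u x e : u \in U -> x \in Fu u -> e \in PU u x -> e \in LP u /\ e \in LP x.
Proof.
move=> uU xF ex; have eu : e \in LP u by move: ex; rewrite /Pul inE => /andP [].
by split => //; have [w wF ew] := Fu_cover uU eu; rewrite -(Pul_uniq ex wF ew).
Qed.

Lemma precu_sanc u x y e f : prec u x y -> e \in PU u x -> f \in PU u y -> sanc e f.
Proof. by move=> /forall_inP /(_ e) xy ex fy; have /forall_inP := xy ex; apply. Qed.

Lemma precuI u x y : (forall e f, e \in PU u x -> f \in PU u y -> sanc e f) -> prec u x y.
Proof. by move=> xy; apply/forall_inP => e ex; apply/forall_inP => f; apply: xy. Qed.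

Lemma precu_irr u x : u \in U -> x \in Fu u -> ~~ prec u x x.
Proof.
move=> uU xF; apply/negP => xx; have [e ex] := Pul_nonempty uU xF.
by have /sanc_neq := precu_sanc xx ex ex; rewrite eqxx.
Qed.

Lemma lpath_uplink_total u e f : u \in U -> e \in LP u -> f \in LP u -> anc e f || anc f e.
Proof.
move=> uU; have [b lpE] := lpath_uplink (U_uplink uU); rewrite !lpE.
by move=> /andP [_ eb] /andP [_ fb]; apply: anc_total eb fb.
Qed.

Lemma Pul_between u x y e g1 g3 : u \in U -> y \in Fu u -> e \in PU u x ->
  g1 \in LP y -> g3 \in LP y -> anc g1 e -> anc e g3 -> y = x.
Proof.
move=> uU yF ex g1y g3y g1e eg3.
exact: Pul_uniq ex yF (lpath_convex (card_Fu uU yF) g1y g3y g1e eg3).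
Qed.

Lemma precu_of_sanc u x y e0 f0 : u \in U -> x \in Fu u -> y \in Fu u -> x != y ->
  e0 \in PU u x -> f0 \in PU u y -> sanc e0 f0 -> prec u x y.
Proof.
move=> uU xF yF xy e0x f0y e0f0; apply: precuI => e f ex fy.
have [e0u e0x'] := Pul_lpath uU xF e0x; have [f0u f0y'] := Pul_lpath uU yF f0y.
have [eu ex'] := Pul_lpath uU xF ex; have [fu fy'] := Pul_lpath uU yF fy.
have ef : e != f by apply: contra_neq xy => ef; rewrite (Pul_uniq fy xF) -?ef.
rewrite /sanc ef; case/orP: (lpath_uplink_total uU eu fu) => // fe.
case/orP: (lpath_uplink_total uU f0u eu) => [f0e | ef0].
  by rewrite (Pul_between uU xF f0y e0x' ex' (sancW e0f0) f0e) eqxx in xy.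
by rewrite (Pul_between uU yF ex fy' f0y' fe ef0) eqxx in xy.
Qed.

Lemma precu_total u x y : u \in U -> x \in Fu u -> y \in Fu u -> x != y ->
  prec u x y || prec u y x.
Proof.
move=> uU xF yF xy; have [e ex] := Pul_nonempty uU xF; have [f fy] := Pul_nonempty uU yF.
have [eu ex'] := Pul_lpath uU xF ex; have [fu fy'] := Pul_lpath uU yF fy.
have ef : e != f by apply: contra_neq xy => ef; rewrite (Pul_uniq fy xF) -?ef.
case/orP: (lpath_uplink_total uU eu fu) => [e_f | f_e].
  by rewrite (precu_of_sanc uU xF yF xy ex fy) // /sanc ef.
by rewrite (precu_of_sanc uU yF xF _ fy ex) ?orbT // 1?eq_sym // /sanc eq_sym ef.
Qed.

Lemma precu_trans u x y z : u \in U -> y \in Fu u -> prec u x y -> prec u y z -> prec u x z.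
Proof.
move=> uU yF xy yz; have [f fy] := Pul_nonempty uU yF.
apply: precuI => e g ex gz.
exact: sanc_anc_trans (precu_sanc xy ex fy) (sancW (precu_sanc yz fy gz)).
Qed.

Lemma precu_apex u x y : u \in U -> x \in Fu u -> y \in Fu u -> prec u x y ->
  ~~ anc (apx y) (apx x).
Proof.
move=> uU xF yF xy; apply/negP => yx.
have [e ex] := Pul_nonempty uU xF; have [f fy] := Pul_nonempty uU yF.
have [_ ex'] := Pul_lpath uU xF ex; have [_ fy'] := Pul_lpath uU yF fy.
have y_e : sanc (apx y) e := anc_sanc_trans yx (apex_sanc (card_Fu uU xF) ex').
have ey := lpath_below (card_Fu uU yF) (apex_lverts (card_Fu uU yF)) y_e
  (sancW (precu_sanc xy ex fy)) fy'.
by move: xy; rewrite -(Pul_uniq ex yF ey) (negbTE (precu_irr uU yF)).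
Qed.

Lemma AuP u x y : (x, y) \in AU u -> [/\ x \in Fu u, y \in Fu u, prec u x y &
  forall z, z \in Fu u -> ~~ (prec u x z && prec u z y)].
Proof. by rewrite inE => /and4P [xF yF xy /forall_inP]. Qed.

Lemma Au_apex u x y : u \in U -> (x, y) \in AU u -> apx y \in LP x /\ apx y \in LP u.
Proof.
move=> uU /AuP [xF yF xy xy_next].
have xny : x != y by apply: contraTneq xy => <-; apply: precu_irr.
have [e ex] := Pul_nonempty uU xF; have [f fy] := Pul_nonempty uU yF.
have [eu ex'] := Pul_lpath uU xF ex; have [fu fy'] := Pul_lpath uU yF fy.
have ef := precu_sanc xy ex fy; have qf := apex_sanc (card_Fu uU yF) fy'.
have eq : anc e (apx y).
  apply: contraTT xny => /(anc_sanc_total (sancW ef) (sancW qf)) qe.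
  have ey := lpath_below (card_Fu uU yF) (apex_lverts (card_Fu uU yF)) qe (sancW ef) fy'.
  by rewrite (Pul_uniq ex yF ey) eqxx.
have qu : apx y \in LP u := lpath_convex (card_uplink uU) eu fu eq (sancW qf).
split=> //; have [z zF qz] := Fu_cover uU qu.
have [<- // | zx] := eqVneq z x.
have [zyE | zy] := eqVneq z y.
  by rewrite zyE (negbTE (apex_notin_lpath _)) ?(card_Fu uU) in qz.
case/orP: (precu_total uU zF xF zx) => [zx' | xz].
  have [g gz] := Pul_nonempty uU zF; have [_ gz'] := Pul_lpath uU zF gz.
  have := Pul_between uU zF ex gz' qz (sancW (precu_sanc zx' gz ex)) eq.
  by move/eqP; rewrite (negbTE zx).
have yz : prec u y z.
  by move: (precu_total uU zF yF zy) (xy_next z zF); rewrite xz /= => /orP [] ->.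
have [h hz] := Pul_nonempty uU zF; have [_ hz'] := Pul_lpath uU zF hz.
have := Pul_between uU zF fy qz hz' (sancW qf) (sancW (precu_sanc yz fy hz)).
by move/eqP; rewrite (negbTE zy).
Qed.

Lemma Au_sanc_apex u x y : u \in U -> (x, y) \in AU u -> sanc (apx x) (apx y).
Proof.
move=> uU xyA; have [xF _ _ _] := AuP xyA; have [qx _] := Au_apex uU xyA.
exact: (apex_sanc (card_Fu uU xF) qx).
Qed.

Lemma Au_succ_uniq u x y y' : u \in U -> (x, y) \in AU u -> (x, y') \in AU u -> y = y'.
Proof.
move=> uU /AuP [_ yF xy xy_next] /AuP [_ y'F xy' xy'_next].
apply/eqP; apply: contraT => yy'; case/orP: (precu_total uU yF y'F yy') => [lt_yy' | lt_y'y].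
  by move: (xy'_next y yF); rewrite xy lt_yy'.
by move: (xy_next y' y'F); rewrite xy' lt_y'y.
Qed.

Lemma Au_pred_uniq u u' x x' y : u \in U -> u' \in U ->
  (x, y) \in AU u -> (x', y) \in AU u' -> x = x'.
Proof.
move=> uU u'U xyA x'yA.
have [_ qu] := Au_apex uU xyA; have [_ qu'] := Au_apex u'U x'yA.
have uu' := uplink_eq_of_lpath uU u'U qu qu'; subst u'.
move: xyA x'yA => /AuP [xF _ xy xy_next] /AuP [x'F _ x'y x'y_next].
apply/eqP; apply: contraT => xx'; case/orP: (precu_total uU xF x'F xx') => [lt_xx' | lt_x'x].
  by move: (xy_next x' x'F); rewrite lt_xx' x'y.
by move: (x'y_next x xF); rewrite lt_x'x xy.
Qed.

Lemma mem_Bv v w : (w \in Bv r par F v) = (w \in F) && anc v (apx w).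
Proof. by rewrite inE. Qed.

Lemma covered_byI (S : {set {set V}}) (X : {set V}) :
  (forall e, e \in X -> exists2 w, w \in S & e \in LP w) -> covered_by r par S X.
Proof. by move=> cov; apply/subsetP => e /cov [w wS ew]; apply/bigcupP; exists w. Qed.

Lemma vuP u : u \in U -> anc (vu r par F u) (utop r par u) /\
  forall v, anc v (utop r par u) -> covered_by r par (Bv r par F v) (LP u) ->
    depth par v <= depth par (vu r par F u).
Proof.
move=> uU; rewrite /vu; case: pickP => [v /and3P [vt vcov /forall_inP v_max] | no_vu] /=.
  by split => // v' v't v'cov; apply: v_max; rewrite v't.
pose Pv v := anc v (utop r par u) && covered_by r par (Bv r par F v) (LP u).
have Pr : Pv r.
  rewrite /Pv anc_root /=; apply: covered_byI => e eu.
  have : e \in tree_edges r.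
    have [b lpE] := lpath_uplink (U_uplink uU).
    by move: eu; rewrite lpE inE => /andP [/sanc_neq_root].
  by rewrite -F_covers => /bigcupP [w wF ew]; exists w; rewrite // mem_Bv wF anc_root.
case: (arg_maxnP (depth par) Pr) => v /andP [vt vcov] v_max.
move: (no_vu v); rewrite vt vcov /= => /negP; case.
by apply/forall_inP => v' /andP [v't v'cov]; apply: v_max; rewrite /Pv v't.
Qed.

Lemma anc_vu u v : u \in U -> anc v (utop r par u) ->
  covered_by r par (Bv r par F v) (LP u) -> anc v (vu r par F u).
Proof.
move=> uU vt vcov; have [vu_t vu_max] := vuP uU.
case: (anc_cases vt vu_t) => [-> | /sancW // | vu_v]; first exact: anc_refl.
by have := vu_max v vt vcov; rewrite leqNgt depth_sanc.
Qed.

Lemma vu_anc_Fu u x : u \in U -> x \in Fu u -> anc (vu r par F u) (apx x).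
Proof. by move=> /Fu_min [FuB _ _] /(subsetP FuB); rewrite mem_Bv => /andP []. Qed.

Lemma Bv_covers_uplink u y v z : u \in U -> y \in Fu u -> apx y \in LP u ->
  anc v (apx y) -> z \in F -> anc v (apx z) -> anc (apx z) (utop r par u) ->
  apx y \in LP z -> covered_by r par (Bv r par F v) (LP u).
Proof.
move=> uU yF qu vq zF vz zt qz; have [b lpE] := lpath_uplink (U_uplink uU).
have yF' := subsetP (Fu_subF uU) y yF; have card_y := card_F yF'.
move: (qu); rewrite lpE => /andP [tq qb].
apply: covered_byI => e eu; move: (eu); rewrite lpE => /andP [te eb].
have [eq | neq] := boolP (anc e (apx y)).
  exists z; first by rewrite mem_Bv zF vz.
  exact: (lpath_below (card_F zF) (apex_lverts (card_F zF)) (anc_sanc_trans zt te) eq qz).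
have qe := anc_sanc_total eb qb neq.
have [w wF ew] := Fu_cover uU eu; have wF' := subsetP (Fu_subF uU) w wF.
have [qw | nqw] := boolP (anc (apx y) (apx w)).
  by exists w; rewrite // mem_Bv wF' (anc_trans vq qw).
have wq := anc_sanc_total (sancW qe) (sancW (apex_sanc (card_F wF') ew)) nqw.
have [f fy] := Pul_nonempty uU yF; have [fu fy'] := Pul_lpath uU yF fy.
case/orP: (lpath_uplink_total uU eu fu) => [ef | fe].
  exists y; first by rewrite mem_Bv yF' vq.
  exact: (lpath_below card_y (apex_lverts card_y) qe ef fy').
have wf : sanc (apx w) f := sanc_anc_trans wq (sancW (apex_sanc card_y fy')).
have fw := lpath_below (card_F wF') (apex_lverts (card_F wF')) wf fe ew.
by move: wq; rewrite (Pul_uniq fy wF fw) => /sanc_neq; rewrite eqxx.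
Qed.

(* Either z reaches up to the top of u, and then B_q covers P_u against the
   maximality of v_u, or apex z lies on P_u and z falls strictly between x and y. *)
Lemma sibling_lverts u x y q z : u \in U -> (x, y) \in AU u ->
  sanc (apx x) q -> sanc q (apx y) -> q \notin LP u ->
  z \in F -> anc q (apx z) -> ~~ anc (apx y) (apx z) -> (apx z \in LP u -> z \in Fu u) ->
  forall v, v \in LV z -> ~~ anc (apx y) v.
Proof.
move=> uU xyA xq qy qu zF qz nyz zu_Fu v vz; apply/negP => yv.
have [xF yF xy xy_next] := AuP xyA; have [_ yu] := Au_apex uU xyA.
have [b lpE] := lpath_uplink (U_uplink uU); move: (yu); rewrite lpE => /andP [ty yb].
have yz := lpath_separating (card_F zF) vz (apex_lverts (card_F zF)) yv nyz.
have zy : sanc (apx z) (apx y).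
  by apply: anc_sanc_total (anc_refl _ _) (apex_anc (card_F zF) (lpath_lverts yz).1) nyz.
have [zt | nzt] := boolP (anc (apx z) (utop r par u)).
  have qt : anc q (utop r par u).
    apply: contraTT qu => /(anc_sanc_total (sancW qy) (sancW ty)) tq.
    by rewrite lpE tq (anc_trans (sancW qy) yb).
  have qvu := anc_vu uU qt (Bv_covers_uplink uU yF yu (sancW qy) zF qz zt yz).
  by move: (sanc_nanc xq); rewrite (anc_trans qvu (vu_anc_Fu uU xF)).
have tz := anc_sanc_total (sancW zy) (sancW ty) nzt.
have zFu : z \in Fu u by apply: zu_Fu; rewrite lpE tz (anc_trans (sancW zy) yb).
have zny : z != y by apply: contraTneq zy => ->; rewrite /sanc eqxx.
case/orP: (precu_total uU zFu yF zny) => [zy' | yz']; last first.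
  by move: (precu_apex uU yF zFu yz'); rewrite (sancW zy).
have xz : anc (apx x) (apx z) := anc_trans (sancW xq) qz.
have znx : z != x by apply: contraTneq xq => <-; apply/negP => /sanc_nanc; rewrite qz.
case/orP: (precu_total uU zFu xF znx) => [zx' | xz'].
  by move: (precu_apex uU zFu xF zx'); rewrite xz.
by move: (xy_next z zFu); rewrite xz' zy'.
Qed.

Definition dep_arc : rel {set V} := fun x y => (x, y) \in darcs r par Fu U.

Lemma dep_arcP x y : reflect (exists2 u, u \in U & (x, y) \in AU u) (dep_arc x y).
Proof.
rewrite /dep_arc inE; apply: (iffP existsP) => [[u /andP [uU xyA]] | [u uU xyA]].
  by exists u.
by exists u; rewrite uU.
Qed.

Lemma dep_arc_F x y : dep_arc x y -> x \in F /\ y \in F.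
Proof. by case/dep_arcP => u uU /AuP [xF yF _ _]; rewrite !(subsetP (Fu_subF uU)). Qed.

Lemma dep_arc_sanc_apex x y : dep_arc x y -> sanc (apx x) (apx y).
Proof. by case/dep_arcP => u uU /(Au_sanc_apex uU). Qed.

Lemma dep_arc_apex_lverts x y : dep_arc x y -> apx y \in LV x.
Proof. by case/dep_arcP => u uU /(Au_apex uU) [/lpath_lverts []]. Qed.

Lemma dep_arc_Fu x y u : dep_arc x y -> u \in U -> apx y \in LP u -> y \in Fu u.
Proof.
case/dep_arcP => u' u'U xyA uU yu; have [_ yu'] := Au_apex u'U xyA.
by rewrite (uplink_eq_of_lpath uU u'U yu yu'); case/AuP: xyA.
Qed.

Lemma dep_arc_pred_uniq x x' y : dep_arc x y -> dep_arc x' y -> x = x'.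
Proof. by case/dep_arcP => u uU xyA /dep_arcP [u' u'U]; apply: Au_pred_uniq xyA. Qed.

Lemma connect_dep_arc_apex x y : connect dep_arc x y -> anc (apx x) (apx y).
Proof.
move: y; apply: connect_path_ind; first exact: anc_refl.
by move=> y y' xy /dep_arc_sanc_apex /sancW; apply: anc_trans.
Qed.

Lemma branch_lverts u u' x y y' z v : u \in U -> u' \in U -> u != u' ->
  (x, y) \in AU u -> (x, y') \in AU u' -> sanc (apx y) (apx y') ->
  connect dep_arc y z -> v \in LV z -> ~~ anc (apx y') v.
Proof.
move=> uU u'U uu' xyA xy'A yy' yz; have [_ yFu _ _] := AuP xyA.
have yF := subsetP (Fu_subF uU) y yFu; have [_ yu] := Au_apex uU xyA.
have yu' : apx y \notin LP u'.
  by apply: contra uu' => yu'; rewrite (uplink_eq_of_lpath uU u'U yu yu').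
have sibling := sibling_lverts u'U xy'A (Au_sanc_apex uU xyA) yy' yu'.
pose I z := [/\ z \in F, anc (apx y) (apx z) & forall v, v \in LV z -> ~~ anc (apx y') v].
suff [] : I z by move=> _ _; apply.
move: z yz; apply: connect_path_ind.
  split; rewrite ?anc_refl //; apply: sibling; rewrite ?anc_refl ?sanc_nanc //.
  by move=> /(negP yu').
move=> z1 z2 [z1F yz1 z1_low] z12; have [_ z2F] := dep_arc_F z12.
have yz2 := anc_trans yz1 (sancW (dep_arc_sanc_apex z12)).
split=> //; apply: sibling => //; first exact: z1_low (dep_arc_apex_lverts z12).
exact: dep_arc_Fu z12 u'U.
Qed.

Lemma precu_apex_lverts u x z y a : u \in U -> x \in Fu u -> z \in Fu u -> y \in Fu u ->
  prec u x z -> prec u z y -> a \in LV x -> ~~ anc (apx y) a.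
Proof.
move=> uU xF zF yF xz zy aV; apply/negP => ya.
have card_x := card_Fu uU xF; have card_y := card_Fu uU yF.
have yx := lpath_separating card_x aV (apex_lverts card_x) ya
  (precu_apex uU xF yF (precu_trans uU zF xz zy)).
have [g gx] := Pul_nonempty uU xF; have [_ gx'] := Pul_lpath uU xF gx.
have [e ez] := Pul_nonempty uU zF.
have [f fy] := Pul_nonempty uU yF; have [_ fy'] := Pul_lpath uU yF fy.
have ef := precu_sanc zy ez fy; have yf := apex_sanc card_y fy'.
have [ey | ney] := boolP (anc e (apx y)).
  have xz_eq := Pul_between uU xF ez gx' yx (sancW (precu_sanc xz gx ez)) ey.
  by move: xz; rewrite xz_eq (negbTE (precu_irr uU zF)).
have ye := anc_sanc_total (sancW ef) (sancW yf) ney.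
have ey := lpath_below card_y (apex_lverts card_y) ye (sancW ef) fy'.
by move: zy; rewrite (Pul_uniq ez yF ey) (negbTE (precu_irr uU zF)).
Qed.

Local Notation wcomp := (wcomp r par Fu U).
Local Notation wrel := (wrel r par Fu U).

Lemma wcomp_F x0 z : x0 \in F -> z \in wcomp x0 -> z \in F.
Proof.
rewrite /wcomp inE => x0F x0z; have [-> // | zx0] := eqVneq z x0.
by have [y _ /orP [] /dep_arc_F []] := connect_last_step x0z zx0.
Qed.

Lemma wcomp_connect x0 z1 z2 : z1 \in wcomp x0 -> z2 \in wcomp x0 -> connect wrel z1 z2.
Proof.
have wrel_sym : connect_sym wrel by apply: sym_connect_sym => a b; rewrite /wrel orbC.
by rewrite !inE => x0z1; apply: connect_trans; rewrite wrel_sym.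
Qed.

Lemma wcomp_source x0 rho y : rho \in wcomp x0 ->
  (y, rho) \notin [set a in darcs r par Fu U | (a.1 \in wcomp x0) && (a.2 \in wcomp x0)] ->
  ~~ dep_arc y rho.
Proof.
move=> rhoC; apply: contra => y_rho.
have yC : y \in wcomp x0.
  move: rhoC; rewrite /wcomp !inE => /connect_trans; apply; apply: connect1.
  by apply/orP; right.
by rewrite inE /= yC rhoC !andbT.
Qed.

Lemma lverts_apex_on_walk rho s lb : (forall y, ~~ dep_arc y rho) -> path dep_arc rho s ->
  last rho s \in F -> lb \in F -> connect wrel (last rho s) lb ->
  apx (last rho s) \in LV lb -> lb \in rho :: s.
Proof.
move=> rho_src walk; set l := last rho s => lF lbF l_lb l_lbV.
case: (weak_connect_walk dep_arc_pred_uniq rho_src walk l_lb) => [// |].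
move=> [x [c [xW xc xcW clb]]].
have cl : anc (apx c) (apx l).
  exact: anc_trans (connect_dep_arc_apex clb) (apex_anc (card_F lbF) l_lbV).
have [xl | xnl] := eqVneq x l.
  by rewrite -xl in cl; move: (sanc_nanc (dep_arc_sanc_apex xc)); rewrite cl.
have [y xyW] := walk_succ xW xnl; have xy := path_zip walk xyW.
have y_l : connect dep_arc y l.
  by apply: path_connect_last walk _; have [_ ys] := zip_walk_mem xyW; rewrite inE ys orbT.
have yl := connect_dep_arc_apex y_l.
have lV : apx l \in LV l := apex_lverts (card_F lF).
case/dep_arcP: xy => u uU xyA; case/dep_arcP: xc => u' u'U xcA.
have uu' : u != u'.
  by apply: contraNneq xcW => uu'; subst u'; rewrite -(Au_succ_uniq uU xyA xcA).
case: (anc_cases yl cl) => [yc | yc | cy].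
- have [_ yu] := Au_apex uU xyA; have [_ cu'] := Au_apex u'U xcA.
  by case/eqP: uu'; apply: uplink_eq_of_lpath uU u'U yu _; rewrite yc.
- by move: (branch_lverts uU u'U uu' xyA xcA yc y_l lV); rewrite cl.
- have u'u : u' != u by rewrite eq_sym.
  by move: (branch_lverts u'U uU u'u xcA xyA cy clb l_lbV); rewrite yl.
Qed.

Lemma card_lverts_apex_walk rho s (S : {set {set V}}) : path dep_arc rho s ->
  (forall lb, lb \in S ->
     [/\ lb \in rho :: s, lb != last rho s & apx (last rho s) \in LV lb]) ->
  #|S| <= #|[set u in U | [exists a in [set a | a \in zip (rho :: s) s], a \in AU u]]|.
Proof.
move=> walk S_walk; set H := [set a | a \in zip (rho :: s) s].
have walk_apex x y : (x, y) \in H -> anc (apx y) (apx (last rho s)).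
  rewrite inE => /zip_walk_mem [_ a2s]; apply/connect_dep_arc_apex/path_connect_last => //.
  by rewrite inE a2s orbT.
apply: (@leq_card_rel _ _ _ _ (fun lb u => [exists a in H, (a.1 == lb) && (a \in AU u)])).
  move=> lb /S_walk [lbW lbnl _]; have [y lbyW] := walk_succ lbW lbnl.
  case/dep_arcP: (path_zip walk lbyW) => u uU lbyA; exists u.
    by rewrite inE uU; apply/existsP; exists (lb, y); rewrite inE lbyW.
  by apply/existsP; exists (lb, y); rewrite inE lbyW eqxx.
move=> x1 x2 u /S_walk [_ _ lx1] /S_walk [_ _ lx2]; rewrite inE => /andP [uU _].
move=> /exists_inP [[x1' y1] x1H /andP [/eqP /= x1E x1A]]; subst x1'.
move=> /exists_inP [[x2' y2] x2H /andP [/eqP /= x2E x2A]]; subst x2'.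
have [x1F y1F x1y1 _] := AuP x1A; have [x2F y2F x2y2 _] := AuP x2A.
apply/eqP; apply: contraT => x12; case/orP: (precu_total uU x1F x2F x12) => [x12' | x21'].
  by move: (precu_apex_lverts uU x1F x2F y2F x12' x2y2 lx1); rewrite (walk_apex _ _ x2H).
by move: (precu_apex_lverts uU x2F x1F y1F x21' x1y1 lx2); rewrite (walk_apex _ _ x1H).
Qed.

End Covers.
End RootedTree.

Theorem lemma13 (V : finType) (r : V) (par : V -> V)
  (L : {set {set V}}) (w : {set V} -> rat) (F : {set {set V}})
  (Fu : {set V} -> {set {set V}}) (U : {set {set V}})
  (x0 : {set V}) (l rho : {set V}) (s : seq {set V}) :
  is_rooted_tree r par ->
  (forall e, e \in L -> #|e| = 2) ->
  (forall e, e \in L -> (0 < w e)%R) ->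
  F \subset L ->
  \bigcup_(e in F) lpath r par e = tree_edges r ->
  U \subset [set u in L | is_uplink par u] ->
  (forall u, u \in U -> minimal_cover r par F u (Fu u)) ->
  (forall u1 u2, u1 \in U -> u2 \in U -> u1 != u2 ->
     [disjoint lpath r par u1 & lpath r par u2]) ->
  x0 \in F ->
  let C := wcomp r par Fu U x0 in
  let A := [set a in darcs r par Fu U | (a.1 \in C) && (a.2 \in C)] in
  l \in C ->
  rho \in C -> (forall y, (y, rho) \notin A) ->
  path (fun x y => (x, y) \in A) rho s -> last rho s = l ->
  let H := [set a | a \in zip (rho :: s) s] in
  #|[set lb in C | (lb != l) && (apex r par l \in lverts r par lb)]|
  <= #|[set u in U | [exists a in H, a \in Au r par Fu u]]|.
Proof.
move=> tree card_L _ FL F_covers UL Fu_min U_disjoint x0F C A lC rhoC rho_src walkA lE; subst l.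
have card_F e : e \in F -> #|e| = 2 by move=> /(subsetP FL); apply: card_L.
have U_uplink u : u \in U -> is_uplink par u by move=> /(subsetP UL); rewrite inE => /andP [].
have walk : path (dep_arc r par Fu U) rho s.
  by apply: sub_path walkA => a b; rewrite inE => /andP [].
have rho_source y : ~~ dep_arc r par Fu U y rho := wcomp_source rhoC (rho_src y).
apply: (card_lverts_apex_walk tree card_F U_uplink Fu_min walk) => lb.
rewrite inE => /and3P [lbC lbnl l_lbV]; split=> //.
apply: (lverts_apex_on_walk tree card_F F_covers U_uplink Fu_min U_disjoint rho_source walk).
- exact: (wcomp_F Fu_min x0F lC).
- exact: (wcomp_F Fu_min x0F lbC).
- exact: (wcomp_connect lC lbC).
- exact: l_lbV.
Qed.
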